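(* Let $1\le q_1<q_2<\cdots$ be a strictly increasing sequence of integers with partial sums $S_n=q_1+\dots+q_n$. For each $n\in\mathbb{N}$ write $$f_n(x)=(1+x^{q_1})\cdots(1+x^{q_n})=\sum_{m=0}^{S_n}\gamma_m(n)x^m.$$ Suppose there exist positive integers $k_0$ and $n_0$ such that $$2k_0+q_{n+1}\le S_n\quad\text{for all } n\ge n_0,\qquad\text{and}\qquad \gamma_m(n_0)\ge 1\quad\text{for all integers } m \text{ with } k_0\le m\le S_{n_0}-k_0.$$ Then every integer $N\ge k_0$ is a sum of one or more distinct members of $\{q_1,q_2,\dots\}$. *)

From mathcomp Require Import all_boot all_order all_algebra.
Set Implicit Arguments. Unset Strict Implicit. Unset Printing Implicit Defensive.
Import GRing.Theory Num.Theory.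

(* The sequence q_1 < q_2 < ... is modelled by q : nat -> nat, 1-indexed
   (the value q 0 is irrelevant and never used). *)

Definition Ssum (q : nat -> nat) (n : nat) : nat := \sum_(1 <= i < n.+1) q i.

Definition f (q : nat -> nat) (n : nat) : {poly int} :=
  \prod_(1 <= i < n.+1) (1 + 'X^(q i)).

Definition gamma (q : nat -> nat) (m n : nat) : int := (f q n)`_m.

From mathcomp Require Import all_boot all_order all_algebra.
From mathcomp Require Import zify.
Import GRing.Theory Num.Theory.

Set Implicit Arguments.
Unset Strict Implicit.

(* Every exponent occurring in f_n is a sum of distinct q_i with i <= n, so
   the hypothesis on gamma(n0) says that every m in [k0, S_{n0} - k0] is such
   a sum.  This window propagates from n to n + 1: a new m in
   (S_n - k0, S_{n+1} - k0] is m - q_{n+1} + q_{n+1}, and the growth condition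
   2 k0 + q_{n+1} <= S_n puts m - q_{n+1} back in the old window.  Since
   S_n >= n, the windows eventually contain every N >= k0. *)

Section SubsetSums.

Variable q : nat -> nat.

Definition subset_sum (n m : nat) : Prop :=
  exists s : seq nat,
    [/\ uniq s, all (fun i => 0 < i <= n) s & m = \sum_(i <- s) q i].

Definition subset_sums_between (k n : nat) : Prop :=
  forall m, k <= m <= Ssum q n - k -> subset_sum n m.

Lemma f_recr n : f q n.+1 = (f q n * (1 + 'X^(q n.+1)))%R.
Proof. by rewrite /f big_nat_recr. Qed.

Lemma Ssum_recr n : Ssum q n.+1 = Ssum q n + q n.+1.
Proof. by rewrite /Ssum big_nat_recr. Qed.

Lemma subset_sum0 : subset_sum 0 0.
Proof. by exists [::]; rewrite big_nil. Qed.

Lemma subset_sum_widen n m : subset_sum n m -> subset_sum n.+1 m.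
Proof.
case=> s [s_uniq s_le ->]; exists s; split=> //.
by apply/allP=> i /(allP s_le) /andP[-> /= /leqW].
Qed.

Lemma subset_sum_addr n m : subset_sum n m -> subset_sum n.+1 (m + q n.+1).
Proof.
case=> s [s_uniq s_le ->]; exists (n.+1 :: s); split.
- by rewrite /= s_uniq andbT; apply/negP=> /(allP s_le); rewrite ltnn andbF.
- by rewrite /= leqnn; apply/allP=> i /(allP s_le) /andP[-> /= /leqW].
- by rewrite big_cons addnC.
Qed.

Lemma subset_sum_coef_f n m : ((f q n)`_m != 0)%R -> subset_sum n m.
Proof.
elim: n m => [|n IHn] m.
  by rewrite /f big_geq // coef1; case: m => // _; apply: subset_sum0.
rewrite f_recr mulrDr mulr1 coefD coefMXn.
have [_ | le_q_m] := ltnP m (q n.+1).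
  by rewrite addr0 => /IHn /subset_sum_widen.
have [-> | fm_neq0] := eqVneq ((f q n)`_m)%R 0%R; last first.
  by move=> _; apply/subset_sum_widen/IHn.
by rewrite add0r => /IHn /subset_sum_addr; rewrite subnK.
Qed.

Lemma subset_sums_between_recr k n :
  2 * k + q n.+1 <= Ssum q n -> subset_sums_between k n ->
  subset_sums_between k n.+1.
Proof.
move=> grow window m /andP[le_k_m]; rewrite Ssum_recr => le_m_S.
have [old | new] := leqP m (Ssum q n - k).
  by apply/subset_sum_widen/window; rewrite le_k_m.
have /subset_sum_addr : subset_sum n (m - q n.+1) by apply: window; lia.
by rewrite subnK //; lia.
Qed.

Lemma subset_sums_between_grow k n0 n :
  (forall n, n0 <= n -> 2 * k + q n.+1 <= Ssum q n) ->
  subset_sums_between k n0 -> n0 <= n -> subset_sums_between k n.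
Proof.
move=> grow window; elim: n => [|n IHn]; first by rewrite leqn0 => /eqP <-.
rewrite leq_eqVlt => /predU1P[<- // | le_n0_n].
exact/subset_sums_between_recr/IHn/le_n0_n/grow.
Qed.

Lemma leq_Ssum n : (forall i, 0 < i -> 0 < q i) -> n <= Ssum q n.
Proof.
move=> q_gt0; apply: (@leq_trans (\sum_(1 <= i < n.+1) 1)).
  by rewrite sum_nat_const_nat subn1 muln1.
by rewrite /Ssum !big_nat; apply: leq_sum => i /andP[/q_gt0].
Qed.

Lemma increasing_gt0 :
  0 < q 1 -> (forall i, 0 < i -> q i < q i.+1) -> forall i, 0 < i -> 0 < q i.
Proof.
move=> q1_gt0 q_incr; elim=> [// | [// | i] IHi _].
by have := q_incr i.+1 isT; have := IHi isT; lia.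
Qed.

End SubsetSums.

Theorem theorem2p1 (q : nat -> nat) (k0 n0 : nat) :
  (1 <= q 1)%N ->
  (forall i : nat, (1 <= i)%N -> (q i < q i.+1)%N) ->
  (0 < k0)%N -> (0 < n0)%N ->
  (forall n : nat, (n0 <= n)%N -> (2 * k0 + q n.+1 <= Ssum q n)%N) ->
  (forall m : nat, (k0 <= m)%N -> (m <= Ssum q n0 - k0)%N ->
     (1 <= gamma q m n0)%R) ->
  forall N : nat, (k0 <= N)%N ->
    exists s : seq nat,
      [/\ s != [::], uniq s, all (fun i => 0 < i)%N s &
          N = \sum_(i <- s) q i].
Proof.
move=> q1_gt0 q_incr k0_gt0 _ grow gamma_ge1 N le_k0_N.
have window0 : subset_sums_between q k0 n0.
  move=> m /andP[le_k0_m le_m_S]; apply: subset_sum_coef_f.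
  apply: contraTneq (gamma_ge1 m le_k0_m le_m_S) => f_m0.
  by rewrite /gamma f_m0 ler10.
have le_S : N + k0 <= Ssum q (n0 + (N + k0)).
  exact/(leq_trans (leq_addl n0 _))/leq_Ssum/increasing_gt0.
have [s [s_uniq s_range N_eq]] : subset_sum q (n0 + (N + k0)) N.
  by apply: (subset_sums_between_grow grow window0 (leq_addr _ _)); lia.
exists s; split=> //.
- by apply: contraTneq le_k0_N => s_nil; rewrite N_eq s_nil big_nil -ltnNge.
- by apply/allP=> i /(allP s_range) /andP[].
Qed.
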